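(* Let $a,b,c,d$ be independent random integers, each uniformly distributed on $\{0,1,\ldots,999\}$, and let $e=a+b+c+d$. Write $a=100a_1+10a_2+a_3$ with digits $a_1,a_2,a_3\in\{0,\ldots,9\}$, and $e=1000e_0+100e_1+10e_2+e_3$ with $e_0\in\{0,1,2,3\}$ and $e_1,e_2,e_3\in\{0,\ldots,9\}$. For $i\in\{1,2,3\}$ define the carry $$c_{i-1}=\left\lfloor \frac{(a \bmod 10^{4-i})+(b \bmod 10^{4-i})+(c \bmod 10^{4-i})+(d \bmod 10^{4-i})}{10^{4-i}}\right\rfloor\in\{0,1,2,3\}.$$ Then $I(a_1;e_0)>0$, and $I(a_i;e_j)=0$ for all $i\in\{1,2,3\}$ and $j\in\{1,2,3\}$. Moreover, $I(a_i;e_i\mid c_{i-1})>0$ for $i=1,2,3$.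
   Context: $I(X;Y)$ denotes the mutual information and $I(X;Y\mid Z)$ the conditional mutual information of discrete random variables. Digits are indexed so that smaller subscripts correspond to higher place values ($a_1$ is the hundreds digit of $a$, $e_0$ the thousands digit of $e$). The quantity $c_{i-1}$ is the carry propagated from digit place $i$ into the next higher place $i-1$ when adding $a,b,c,d$ column by column (including carries from lower places); it is not a digit of the operand $c$. *)

From HB Require Import structures.
From mathcomp Require Import all_boot all_order all_algebra.
From mathcomp Require Import reals exp.
Set Implicit Arguments. Unset Strict Implicit. Unset Printing Implicit Defensive.
Import Order.TTheory GRing.Theory Num.Theory.
Local Open Scope ring_scope.

Definition Omega : finType := ('I_1000 * 'I_1000 * 'I_1000 * 'I_1000)%type.

Definition A (w : Omega) : nat := nat_of_ord w.1.1.1.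
Definition B (w : Omega) : nat := nat_of_ord w.1.1.2.
Definition C (w : Omega) : nat := nat_of_ord w.1.2.
Definition D (w : Omega) : nat := nat_of_ord w.2.
Definition E (w : Omega) : nat := (A w + B w + C w + D w)%N.

Definition adigit (i : nat) (w : Omega) : nat := ((A w %/ 10 ^ (3 - i)) %% 10)%N.
Definition e0 (w : Omega) : nat := (E w %/ 1000)%N.
Definition edigit (j : nat) (w : Omega) : nat := ((E w %/ 10 ^ (3 - j)) %% 10)%N.
Definition carry (i : nat) (w : Omega) : nat :=
  let m := (10 ^ (4 - i))%N in
  ((A w %% m + B w %% m + C w %% m + D w %% m) %/ m)%N.

Section Info.
Variable R : realType.
Variable T : finType.

Definition prob (P : pred T) : R := #|[set w | P w]|%:R / #|T|%:R.

Definition range (X : T -> nat) : seq nat := undup [seq X w | w <- enum T].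

Definition MI (X Y : T -> nat) : R :=
  \sum_(x <- range X) \sum_(y <- range Y)
    let pxy := prob (fun w => (X w == x) && (Y w == y)) in
    pxy * ln (pxy / (prob (fun w => X w == x) * prob (fun w => Y w == y))).

Definition CMI (X Y Z : T -> nat) : R :=
  \sum_(x <- range X) \sum_(y <- range Y) \sum_(z <- range Z)
    let pxyz := prob (fun w => [&& X w == x, Y w == y & Z w == z]) in
    pxyz * ln (prob (fun w => Z w == z) * pxyz /
                (prob (fun w => (X w == x) && (Z w == z)) *
                 prob (fun w => (Y w == y) && (Z w == z)))).
End Info.

(* Mutual informations are relative entropies whose two arguments have the
   same total mass, so by Gibbs' inequality they vanish when the joint law is
   the product law and are positive as soon as a single cell differs.
   Adding 10^(3-j) to b modulo 1000 fixes a and rotates the digit e_j, so e_j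
   is uniform given a and independent of every digit of a.  Adding 100 to a
   modulo 1000 rotates a_1 and maps the event {a_1 = 9, e_0 = 0} strictly
   into {a_1 = 0, e_0 = 0}, so a_1 and e_0 are dependent.  Finally the cell
   a_i = 9, e_i = 0, c_{i-1} = 0 is empty (without a carry out of place i,
   the digit e_i is at least a_i) although both of its two-variable marginals
   are not, which makes I(a_i; e_i | c_{i-1}) positive. *)

From mathcomp Require Import all_boot all_order all_algebra.
From mathcomp Require Import reals exp.
From mathcomp Require Import zify lra.
Import Order.TTheory GRing.Theory Num.Theory.

Local Open Scope ring_scope.

Section Gibbs.
Variable R : realType.

Lemma ln_lt_subr1 (x : R) : 0 < x -> x != 1 -> ln x < x - 1.
Proof.
move=> x_gt0 x_neq1; rewrite -ltr_expR lnK ?posrE //.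
have := @expR_gt1Dx R (x - 1); rewrite subr_eq0 => /(_ x_neq1); lra.
Qed.

Lemma gibbs_lt (p q : R) : 0 <= p -> 0 <= q -> (0 < p -> 0 < q) -> p != q ->
  p - q < p * ln (p / q).
Proof.
move=> p_ge0 q_ge0 pq p_neq_q; have [p0|p_neq0] := eqVneq p 0.
  by move: p_neq_q; rewrite p0 eq_sym mul0r sub0r oppr_lt0 lt_def q_ge0 andbT.
have p_gt0 : 0 < p by rewrite lt_def p_neq0.
have q_gt0 := pq p_gt0.
have qp_neq1 : q / p != 1.
  by apply: contra_neq p_neq_q => qp1; rewrite -[q](divfK p_neq0) qp1 mul1r.
rewrite -[p / q]invf_div lnV ?posrE ?divr_gt0 // mulrN.
have := @ln_lt_subr1 (q / p) (divr_gt0 q_gt0 p_gt0) qp_neq1.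
rewrite -(ltr_pM2l p_gt0) mulrBr mulr1 mulrCA divff // mulr1; lra.
Qed.

Lemma gibbs_le (p q : R) : 0 <= p -> 0 <= q -> (0 < p -> 0 < q) ->
  p - q <= p * ln (p / q).
Proof.
move=> p_ge0 q_ge0 pq; have [<-|p_neq_q] := eqVneq p q; last exact/ltW/gibbs_lt.
by rewrite subrr; have [->|p_neq0] := eqVneq p 0; rewrite ?mul0r // divff // ln1 mulr0.
Qed.

Lemma relative_entropy_gt0 (I : eqType) (s : seq I) (p q : I -> R) i0 :
  (forall i, i \in s -> [/\ 0 <= p i, 0 <= q i & (0 < p i -> 0 < q i)]) ->
  \sum_(i <- s) p i = \sum_(i <- s) q i -> i0 \in s -> p i0 != q i0 ->
  0 < \sum_(i <- s) p i * ln (p i / q i).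
Proof.
move=> pq sum_pq s_i0 pq_i0.
have -> : \sum_(i <- s) p i * ln (p i / q i) =
          \sum_(i <- s) (p i * ln (p i / q i) - (p i - q i)).
  by rewrite sumrB sumrB sum_pq subrr subr0.
rewrite big_seq lt_def psumr_neq0 => [|i /pq[? ? ?]]; last by rewrite subr_ge0 gibbs_le.
apply/andP; split; last by apply: sumr_ge0 => i /pq[? ? ?]; rewrite subr_ge0 gibbs_le.
apply/hasP; exists i0; rewrite // s_i0 subr_gt0.
by case: (pq i0 s_i0) => ? ? ?; apply: gibbs_lt.
Qed.

End Gibbs.

Section UniformProbability.
Variables (R : realType) (T : finType).
Implicit Types (P Q : pred T) (X Y : T -> nat).

Lemma prob_ge0 P : 0 <= prob R P.
Proof. by rewrite divr_ge0 ?ler0n. Qed.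

Lemma prob_gt0P P : reflect (exists w, P w) (0 < prob R P).
Proof.
case: (pickP P) => [w Pw | noP].
  suff -> : 0 < prob R P by left; exists w.
  by rewrite divr_gt0 // ltr0n; apply/card_gt0P; exists w; rewrite ?inE.
rewrite /prob (_ : [set w | P w] = set0) ?cards0 ?mul0r ?ltxx.
  by right=> -[w]; rewrite noP.
by apply/setP => w; rewrite !inE noP.
Qed.

Lemma prob_eq0 P : (forall w, ~~ P w) -> prob R P = 0.
Proof.
move=> noP; apply/eqP; rewrite eq_le prob_ge0 andbT leNgt.
by apply/prob_gt0P => -[w]; apply/negP.
Qed.

Lemma eq_prob P Q : P =1 Q -> prob R P = prob R Q.
Proof.
by move=> PQ; rewrite /prob (eq_card (B := [set w | Q w])) // => w; rewrite !inE.
Qed.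

Lemma probT (w0 : T) : prob R (fun _ : T => true) = 1.
Proof.
rewrite /prob (eq_card (B := T)) => [|w]; last by rewrite inE.
by rewrite divff // pnatr_eq0 -lt0n; apply/card_gt0P; exists w0.
Qed.

Lemma prob_lt_card P Q :
  (#|[set w | P w]| < #|[set w | Q w]|)%N -> prob R P < prob R Q.
Proof.
move=> ltPQ; have T_gt0 : (0 < #|T|)%N.
  exact: leq_ltn_trans (leq_trans ltPQ (max_card _)).
by rewrite ltr_pM2r ?invr_gt0 ?ltr0n // ltr_nat.
Qed.

Lemma sum_card_fiber (s : seq nat) Y Q : uniq s -> (forall w, Y w \in s) ->
  (\sum_(y <- s) #|[set w | (Y w == y) && Q w]| = #|[set w | Q w]|)%N.
Proof.
move=> s_uniq Y_s; under eq_bigr do rewrite -sum1dep_card big_mkcond.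
rewrite exchange_big -sum1dep_card [RHS]big_mkcond; apply: eq_bigr => w _ /=.
rewrite (bigD1_seq (Y w)) //= eqxx big1 ?addn0 // => y /negbTE.
by rewrite eq_sym => ->.
Qed.

Lemma mem_range X w : X w \in range X.
Proof. by rewrite mem_undup map_f ?mem_enum. Qed.

Lemma rangeP X x : reflect (exists w, X w = x) (x \in range X).
Proof.
rewrite mem_undup; apply: (iffP mapP) => [[w _ ->]|[w <-]]; first by exists w.
by exists w; rewrite ?mem_enum.
Qed.

Lemma sum_prob_range X Q :
  \sum_(x <- range X) prob R (fun w => (X w == x) && Q w) = prob R Q.
Proof.
rewrite /prob -mulr_suml -natr_sum sum_card_fiber //.
  exact: undup_uniq.
exact: mem_range.
Qed.

Lemma sum_prob_range1 X :
  \sum_(x <- range X) prob R (fun w => X w == x) = prob R (fun _ : T => true).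
Proof.
rewrite -(sum_prob_range X (fun=> true)); apply: eq_bigr => x _.
by apply: eq_prob => w; rewrite andbT.
Qed.

End UniformProbability.

Section MutualInformation.
Variables (R : realType) (T : finType).
Implicit Types (X Y Z : T -> nat).

Lemma MI_eq0 X Y :
  (forall x y, x \in range X -> y \in range Y ->
     prob R (fun w => (X w == x) && (Y w == y)) =
     prob R (fun w => X w == x) * prob R (fun w => Y w == y)) ->
  MI R X Y = 0.
Proof.
move=> indep; rewrite /MI big_seq big1 // => x Xx; rewrite big_seq big1 // => y Yy.
rewrite -indep //; set p := prob _ _.
by have [->|p_neq0] := eqVneq p 0; rewrite ?mul0r // divff // ln1 mulr0.
Qed.

Lemma MI_gt0 X Y x y : x \in range X -> y \in range Y ->
  prob R (fun w => (X w == x) && (Y w == y)) !=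
    prob R (fun w => X w == x) * prob R (fun w => Y w == y) ->
  0 < MI R X Y.
Proof.
move=> Xx Yy dep; have /rangeP[w0 _] := Xx.
pose pXY c := prob R (fun w => (X w == c.1) && (Y w == c.2)).
pose pX_pY c := prob R (fun w => X w == c.1) * prob R (fun w => Y w == c.2).
have -> : MI R X Y = \sum_(c <- [seq (x, y) | x <- range X, y <- range Y])
                       pXY c * ln (pXY c / pX_pY c) by rewrite big_allpairs.
apply: (@relative_entropy_gt0 R _ _ _ _ (x, y)); last 2 first.
- exact: allpairs_f.
- exact: dep.
- move=> c _; rewrite /pXY /pX_pY; split.
  + exact: prob_ge0.
  + by rewrite mulr_ge0 ?prob_ge0.
  + move=> /prob_gt0P[w /andP[/eqP <- /eqP <-]].
    by rewrite mulr_gt0 //; apply/prob_gt0P; exists w.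
rewrite !big_allpairs /pXY /pX_pY exchange_big /=.
under eq_bigr do rewrite sum_prob_range.
rewrite sum_prob_range1.
under eq_bigr do rewrite -mulr_sumr sum_prob_range1.
by rewrite -mulr_suml sum_prob_range1 probT // mulr1.
Qed.

Lemma MI_gt0_of_lt X Y x x' y :
  prob R (fun w => X w == x) = prob R (fun w => X w == x') ->
  prob R (fun w => (X w == x) && (Y w == y)) <
    prob R (fun w => (X w == x') && (Y w == y)) ->
  0 < MI R X Y.
Proof.
move=> eq_x lt_xy.
have /prob_gt0P[w /andP[/eqP Xw /eqP Yw]] := le_lt_trans (prob_ge0 _ _ _) lt_xy.
have /prob_gt0P[w' /eqP Xw'] : 0 < prob R (fun w => X w == x).
  by rewrite eq_x; apply/prob_gt0P; exists w; rewrite Xw.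
have Yy : y \in range Y by apply/rangeP; exists w.
have [indep|] := eqVneq (prob R (fun w => (X w == x) && (Y w == y)))
                        (prob R (fun w => X w == x) * prob R (fun w => Y w == y)).
  apply: (@MI_gt0 X Y x' y) => //; first by apply/rangeP; exists w.
  by rewrite -eq_x -indep gt_eqF.
by apply: MI_gt0 => //; apply/rangeP; exists w'.
Qed.

Lemma sum_prob_range3 X Y Z :
  \sum_(x <- range X) \sum_(y <- range Y) \sum_(z <- range Z)
     prob R (fun w => [&& X w == x, Y w == y & Z w == z]) =
  prob R (fun _ : T => true).
Proof.
rewrite exchange_big; under eq_bigr do rewrite exchange_big /=.
under eq_bigr do under eq_bigr do rewrite sum_prob_range.
rewrite exchange_big; under eq_bigr do rewrite sum_prob_range.
exact: sum_prob_range1.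
Qed.

Lemma sum_prob_cond_product X Y Z :
  \sum_(x <- range X) \sum_(y <- range Y) \sum_(z <- range Z)
     prob R (fun w => (X w == x) && (Z w == z)) *
     prob R (fun w => (Y w == y) && (Z w == z)) / prob R (fun w => Z w == z) =
  prob R (fun _ : T => true).
Proof.
under eq_bigr do rewrite exchange_big.
rewrite exchange_big /= -(@sum_prob_range1 R T Z).
apply: eq_big_seq => z /rangeP[w Zw].
under eq_bigr do rewrite -mulr_suml -mulr_sumr sum_prob_range.
rewrite -mulr_suml -mulr_suml sum_prob_range mulfK // gt_eqF //.
by apply/prob_gt0P; exists w; rewrite Zw.
Qed.

Lemma CMI_gt0 X Y Z x y z w1 w2 :
  (X w1 == x) && (Z w1 == z) -> (Y w2 == y) && (Z w2 == z) ->
  (forall w, ~~ [&& X w == x, Y w == y & Z w == z]) ->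
  0 < CMI R X Y Z.
Proof.
move=> /andP[/eqP Xw1 /eqP Zw1] /andP[/eqP Yw2 /eqP Zw2] no_xyz.
pose pXYZ c := prob R (fun w => [&& X w == c.1, Y w == c.2.1 & Z w == c.2.2]).
pose pXZ x z := prob R (fun w => (X w == x) && (Z w == z)).
pose pYZ y z := prob R (fun w => (Y w == y) && (Z w == z)).
pose pZ z := prob R (fun w => Z w == z).
pose q c := pXZ c.1 c.2.2 * pYZ c.2.1 c.2.2 / pZ c.2.2.
pose cells := [seq (x, yz) | x <- range X,
                             yz <- [seq (y, z) | y <- range Y, z <- range Z]].
have -> : CMI R X Y Z = \sum_(c <- cells) pXYZ c * ln (pXYZ c / q c).
  rewrite big_allpairs; apply: eq_bigr => x' _; rewrite big_allpairs.
  apply: eq_bigr => y' _; apply: eq_bigr => z' _.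
  have divA (u v t : R) : v * u / t = u / (t / v) by rewrite invf_div mulrCA mulrA.
  by rewrite /= (divA (pXYZ (x', (y', z'))) (pZ z') (pXZ x' z' * pYZ y' z')).
apply: (@relative_entropy_gt0 R _ _ _ _ (x, (y, z))).
- move=> c _; rewrite /pXYZ /q /pXZ /pYZ /pZ; split.
  + exact: prob_ge0.
  + by apply: divr_ge0; [apply: mulr_ge0|]; apply: prob_ge0.
  + move=> /prob_gt0P[w /and3P[/eqP <- /eqP <- /eqP <-]].
    by apply: divr_gt0; [apply: mulr_gt0|]; apply/prob_gt0P; exists w; rewrite ?eqxx.
- rewrite /pXYZ /q /pXZ /pYZ /pZ; transitivity (prob R (fun _ : T => true)).
    rewrite -(sum_prob_range3 X Y Z) big_allpairs.
    by apply: eq_bigr => x' _; rewrite big_allpairs.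
  rewrite -(sum_prob_cond_product X Y Z) big_allpairs.
  by apply: eq_bigr => x' _; rewrite big_allpairs.
- by rewrite allpairs_f // ?allpairs_f //; apply/rangeP; eexists; eassumption.
- rewrite /pXYZ prob_eq0 // eq_sym gt_eqF //.
  apply: divr_gt0; [apply: mulr_gt0|]; apply/prob_gt0P.
  + by exists w1; rewrite Xw1 Zw1 !eqxx.
  + by exists w2; rewrite Yw2 Zw2 !eqxx.
  + by exists w1; rewrite Zw1.
Qed.

End MutualInformation.

Section CyclicSymmetry.
Context {T : finType} {sh : T -> T} {Y : T -> nat} {n : nat}.
Hypotheses (sh_inj : injective sh) (Y_lt : forall w, (Y w < n)%N)
           (Y_sh : forall w, Y (sh w) = ((Y w).+1 %% n)%N).

Lemma card_fiber_cycle (Q : pred T) y : (forall w, Q (sh w) = Q w) -> (y < n)%N ->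
  (n * #|[set w | (Y w == y) && Q w]| = #|[set w | Q w]|)%N.
Proof.
move=> Q_sh y_lt; pose f z := #|[set w | (Y w == z) && Q w]|.
have f_succ z : (z < n)%N -> f (z.+1 %% n)%N = f z.
  move=> z_lt; rewrite /f -(card_preimset _ sh_inj); apply: eq_card => w.
  by rewrite !inE Q_sh Y_sh -[(Y w).+1]addn1 -[z.+1]addn1 eqn_modDr !modn_small.
have f_const z : (z < n)%N -> f z = f 0%N.
  elim: z => // z IH z_lt.
  by rewrite -[z.+1](modn_small z_lt) f_succ ?IH // ltnW.
rewrite -(@sum_card_fiber T (iota 0 n) Y Q (iota_uniq 0 n)) => [|w];
  last by rewrite mem_iota add0n Y_lt.
rewrite (eq_big_seq (fun=> f 0%N)) => [|z]; last by rewrite mem_iota => /f_const.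
by rewrite big_const_seq count_predT size_iota iter_addn_0 -(f_const y y_lt) mulnC.
Qed.

Lemma prob_fiber_cycle (R : realType) (Q : pred T) y :
  (forall w, Q (sh w) = Q w) -> (y < n)%N ->
  prob R (fun w => Q w && (Y w == y)) = prob R Q / n%:R.
Proof.
move=> Q_sh y_lt; rewrite /prob -(card_fiber_cycle _ _ Q_sh y_lt) natrM.
rewrite (eq_card (B := [set w | (Y w == y) && Q w])) => [|w]; last by rewrite !inE andbC.
rewrite mulrAC [_ * _%:R * _]mulrAC divff ?mul1r // pnatr_eq0 -lt0n.
exact: leq_ltn_trans y_lt.
Qed.

Lemma prob_cycle_uniform (R : realType) y : (y < n)%N ->
  prob R (fun w => Y w == y) = prob R (fun _ : T => true) / n%:R.
Proof. exact: (prob_fiber_cycle R (fun=> true) y (fun=> erefl)). Qed.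

Lemma prob_indep_cycle (R : realType) (Q : pred T) y :
  (forall w, Q (sh w) = Q w) -> (y < n)%N ->
  prob R (fun w => Q w && (Y w == y)) = prob R Q * prob R (fun w => Y w == y).
Proof.
move=> Q_sh y_lt; rewrite (prob_fiber_cycle _ _ _ Q_sh y_lt).
rewrite prob_cycle_uniform // mulrA; congr (_ / _).
case: (pickP (fun _ : T => true)) => [w0 _|noT]; first by rewrite probT ?mulr1.
by rewrite prob_eq0 ?mul0r // => w; have := noT w.
Qed.

End CyclicSymmetry.

Definition mkw (a b c d : nat) : Omega := (inZp a, inZp b, inZp c, inZp d).
Definition shift_a (k : nat) (w : Omega) : Omega :=
  (inZp (A w + k), w.1.1.2, w.1.2, w.2).
Definition shift_b (k : nat) (w : Omega) : Omega :=
  (w.1.1.1, inZp (B w + k), w.1.2, w.2).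

Lemma operands_lt w : [/\ A w < 1000, B w < 1000, C w < 1000 & D w < 1000]%N.
Proof. by split; apply: ltn_ord. Qed.

Lemma adigit_lt i w : (adigit i w < 10)%N.
Proof. exact: ltn_pmod. Qed.

Lemma edigit_lt j w : (edigit j w < 10)%N.
Proof. exact: ltn_pmod. Qed.

Lemma A_shift_a k w : A (shift_a k w) = ((A w + k) %% 1000)%N.
Proof. by []. Qed.

Lemma E_shift_a k w : E (shift_a k w) = ((A w + k) %% 1000 + B w + C w + D w)%N.
Proof. by []. Qed.

Lemma E_shift_b k w : E (shift_b k w) = (A w + (B w + k) %% 1000 + C w + D w)%N.
Proof. by []. Qed.

Lemma shift_a_inj k : injective (shift_a k).
Proof.
move=> [[[a b] c] d] [[[a1 b1] c1] d1] [] /eqP.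
by rewrite eqn_modDr !modn_small ?ltn_ord // => /eqP/val_inj/= -> -> -> ->.
Qed.

Lemma shift_b_inj k : injective (shift_b k).
Proof.
move=> [[[a b] c] d] [[[a1 b1] c1] d1] [] -> /eqP.
by rewrite eqn_modDr !modn_small ?ltn_ord // => /eqP/val_inj/= -> -> ->.
Qed.

Lemma adigit1_shift_a w : adigit 1 (shift_a 100 w) = ((adigit 1 w).+1 %% 10)%N.
Proof.
have [? _ _ _] := operands_lt w.
by rewrite /adigit A_shift_a /= !expnS expn0 muln1; lia.
Qed.

Lemma e0_shift_a w : adigit 1 w = 9%N -> e0 w = 0%N -> e0 (shift_a 100 w) = 0%N.
Proof.
have [? ? ? ?] := operands_lt w.
by rewrite /adigit /e0 E_shift_a /E /= !expnS expn0 muln1; lia.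
Qed.

Lemma edigit_shift_b j w : (1 <= j <= 3)%N ->
  edigit j (shift_b (10 ^ (3 - j)) w) = ((edigit j w).+1 %% 10)%N.
Proof.
have [? ? ? ?] := operands_lt w; rewrite /edigit E_shift_b /E.
by case: j => [|[|[|[|j]]]] //= _; rewrite ?expnS ?expn0 ?muln1; lia.
Qed.

Lemma edigit_no_carry i w : (1 <= i <= 3)%N ->
  carry i w = 0%N -> adigit i w = 9%N -> edigit i w = 9%N.
Proof.
have [? ? ? ?] := operands_lt w; rewrite /carry /adigit /edigit /E.
by case: i => [|[|[|[|i]]]] //= _; rewrite ?expnS ?expn0 ?muln1; lia.
Qed.

Lemma card_a1_9_lt_a1_0_at_e0_0 :
  (#|[set w | (adigit 1 w == 9%N) && (e0 w == 0%N)]| <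
   #|[set w | (adigit 1 w == 0%N) && (e0 w == 0%N)]|)%N.
Proof.
rewrite -[X in (_ < X)%N](card_preimset _ (shift_a_inj 100)).
apply/proper_card/properP; split.
  apply/subsetP => w; rewrite !inE => /andP[/eqP a1_9 /eqP e0_0].
  by rewrite adigit1_shift_a a1_9 e0_shift_a.
by exists (mkw 900 999 0 0); rewrite !inE.
Qed.

Theorem theorem1 (R : realType) :
  0 < MI R (adigit 1) e0 /\
  (forall i j : nat, (1 <= i <= 3)%N -> (1 <= j <= 3)%N ->
     MI R (adigit i) (edigit j) = 0) /\
  (forall i : nat, (1 <= i <= 3)%N ->
     0 < CMI R (adigit i) (edigit i) (carry i)).
Proof.
split; [|split].
- apply: (@MI_gt0_of_lt R _ (adigit 1) e0 9 0 0).
    by rewrite !(prob_cycle_uniform (shift_a_inj 100) (adigit_lt 1) adigit1_shift_a).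
  exact/prob_lt_card/card_a1_9_lt_a1_0_at_e0_0.
- move=> i j _ j_bnd; apply: MI_eq0 => x y _ /rangeP[w <-].
  exact: (prob_indep_cycle (shift_b_inj _) (edigit_lt j) (edigit_shift_b j^~ j_bnd)
            R (fun w => adigit i w == x) _ (fun=> erefl) (edigit_lt j w)).
- move=> i i_bnd.
  apply: (@CMI_gt0 R _ _ _ _ 9 0 0 (mkw (9 * 10 ^ (3 - i)) 0 0 0) (mkw 0 0 0 0)).
  1,2: by case/andP: i_bnd; case: i => [|[|[|[|i]]]].
  move=> w; apply/and3P => -[/eqP a_9 /eqP e_0 /eqP c_0].
  by move: e_0; rewrite edigit_no_carry.
Qed.
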